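(* Let $n\geq 1$. Each of the following four statements is equivalent to the inequality $d_n^2 < 2p_{n+1}$ (equivalently, $d_n < \sqrt{2}\,(p_{n+1})^{1/2}$): 1. $p_n > d_n\left(\frac{d_n}{2} - 1\right)$; 2. $\displaystyle \sum_{i=1}^{d_n} i \;-\; \sum_{i=1}^{n} d_i \;<\; \frac{d_n}{2} + 2$; 3. $\displaystyle (p_{n+1})^{1/2} < \left(p_n + \tfrac12\right)^{1/2} + \tfrac{\sqrt2}{2}$; 4. $\displaystyle \left(1 + \frac{1}{2p_n}\right)p_{n+1} < \left(\sqrt{p_n} + \frac{\sqrt2}{2}\sqrt{\frac{p_{n+1}}{p_n}}\right)^2$.
   Context: $p_n$ denotes the $n$th prime ($p_1=2$), and $d_n := p_{n+1}-p_n$ is the $n$th prime gap (so $d_1=1$, $d_2=2$). *)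

From mathcomp Require Import all_boot all_order all_algebra.
Set Implicit Arguments. Unset Strict Implicit. Unset Printing Implicit Defensive.

Lemma exists_prime_above (m : nat) : exists q, (m < q) && prime q.
Proof. by case: (prime_above m) => q Hq Pq; exists q; rewrite Hq Pq. Qed.

Definition next_prime (m : nat) : nat := ex_minn (exists_prime_above m).

Fixpoint prime0 (k : nat) : nat :=
  match k with 0 => 2 | k'.+1 => next_prime (prime0 k') end.

(* p_n : the n-th prime, 1-indexed (p_1 = 2); p 0 is a junk value *)
Definition p (n : nat) : nat := prime0 n.-1.

Definition d (n : nat) : nat := p n.+1 - p n.

(** With [a = p_n] and [g = d_n >= 1], so that [p_{n+1} = a + g], each of the
    four inequalities is an algebraic rewriting of [g^2 < 2 (a + g)].  The sum
    of the first [n] gaps telescopes to [p_{n+1} - 2], and the square-root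
    forms become, after squaring once, [g - 1 < sqrt (2 a + 1)] and
    [g < sqrt (2 (a + g))] respectively, which square to the same polynomial
    inequality. *)
From mathcomp Require Import all_boot all_order all_algebra.
From mathcomp Require Import ring lra.
Set Implicit Arguments. Unset Strict Implicit. Unset Printing Implicit Defensive.
Import Order.TTheory GRing.Theory Num.Theory.
Local Open Scope ring_scope.

Lemma ltn_next_prime m : (m < next_prime m)%N.
Proof. by rewrite /next_prime; case: ex_minnP => q /andP[]. Qed.

Lemma prime_next_prime m : prime (next_prime m).
Proof. by rewrite /next_prime; case: ex_minnP => q /andP[]. Qed.

Lemma prime_p n : prime (p n).
Proof. by case: n => [|[|n]] //; apply: prime_next_prime. Qed.

Lemma p_gt1 n : (1 < p n)%N.
Proof. exact/prime_gt1/prime_p. Qed.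

Lemma ltn_p n : (0 < n)%N -> (p n < p n.+1)%N.
Proof. by case: n => [|n] //= _; apply: ltn_next_prime. Qed.

(* The junk value [p 0 = p 1] keeps [p] monotone on all of [nat]. *)
Lemma leq_p : {homo p : m n / (m <= n)%N}.
Proof.
apply: homo_leq => [//|m n k|[//|n]]; first exact: leq_trans.
exact/ltnW/ltn_p.
Qed.

Lemma sum_d n : (\sum_(1 <= i < n.+1) d i)%N = (p n.+1 - 2)%N.
Proof. by rewrite (telescope_sumn _ _ leq_p). Qed.

Lemma sum_natr_id (R : numFieldType) m :
  \sum_(1 <= i < m.+1) (i%:R : R) = m%:R * (m%:R + 1) / 2.
Proof.
elim: m => [|m IH]; first by rewrite big_geq // !mul0r.
by rewrite big_nat_recr //= IH -addn1 natrD; field.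
Qed.

Section GapInequalities.
Variable R : rcfType.
Implicit Types a g x y : R.

Lemma ltr_sqrtr x y : 0 <= x -> (x < Num.sqrt y) = (x ^+ 2 < y).
Proof.
move=> x_ge0; have [y_gt0|y_le0] := ltrP 0 y.
  by rewrite -[RHS]ltr_sqrt // sqrtr_sqr ger0_norm.
by rewrite ler0_sqrtr // !ltNge x_ge0 (le_trans y_le0) ?sqr_ge0.
Qed.

Lemma ltr_mul_halfB1 a g : (g * (g / 2 - 1) < a) = (g ^+ 2 < 2 * (a + g)).
Proof. by apply/idP/idP => ?; nra. Qed.

Lemma ltr_triangular_subr a g :
  (g * (g + 1) / 2 - (a - 2) < g / 2 + 2) = (g ^+ 2 < 2 * a).
Proof. by apply/idP/idP => ?; nra. Qed.

Lemma ltr_sqrt_addV2 a g : 0 <= a -> 1 <= g ->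
  (Num.sqrt (a + g) < Num.sqrt (a + 2^-1) + Num.sqrt 2 / 2)
    = (g ^+ 2 < 2 * (a + g)).
Proof.
move=> a_ge0 g_ge1.
set q := Num.sqrt (a + 2^-1); set s := Num.sqrt 2.
have q2 : q ^+ 2 = a + 2^-1 by rewrite sqr_sqrtr //; lra.
have s2 : s ^+ 2 = 2 by rewrite sqr_sqrtr.
have qs : q * s = Num.sqrt (2 * a + 1).
  by rewrite -sqrtrM; [congr Num.sqrt; field | lra].
have rhs_ge0 : 0 <= q + s / 2 by rewrite addr_ge0 ?divr_ge0 ?sqrtr_ge0.
rewrite -ltr_sqr ?nnegrE ?sqrtr_ge0 // sqr_sqrtr; last lra.
have -> : (q + s / 2) ^+ 2 = q ^+ 2 + q * s + s ^+ 2 / 4 by field.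
rewrite q2 s2 qs.
have -> : (a + g < a + 2^-1 + Num.sqrt (2 * a + 1) + 2 / 4)
          = (g - 1 < Num.sqrt (2 * a + 1)) by apply/idP/idP; lra.
by rewrite ltr_sqrtr ?subr_ge0 //; apply/idP/idP; nra.
Qed.

Lemma ltr_sqr_sqrt_ratio a g : 0 < a -> 0 <= g ->
  ((1 + (2 * a)^-1) * (a + g)
     < (Num.sqrt a + Num.sqrt 2 / 2 * Num.sqrt ((a + g) / a)) ^+ 2)
    = (g ^+ 2 < 2 * (a + g)).
Proof.
move=> a_gt0 g_ge0.
set u := Num.sqrt a; set v := Num.sqrt ((a + g) / a); set s := Num.sqrt 2.
have u2 : u ^+ 2 = a by rewrite sqr_sqrtr // ltW.
have s2 : s ^+ 2 = 2 by rewrite sqr_sqrtr.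
have v2 : v ^+ 2 = (a + g) / a by rewrite sqr_sqrtr // divr_ge0 //; lra.
have uv : u * v = Num.sqrt (a + g).
  by rewrite -sqrtrM ?ltW //; congr Num.sqrt; field; lra.
have su : s * Num.sqrt (a + g) = Num.sqrt (2 * (a + g)) by rewrite -sqrtrM.
have -> : (u + s / 2 * v) ^+ 2 = u ^+ 2 + s * (u * v) + s ^+ 2 / 4 * v ^+ 2.
  by field.
rewrite u2 uv s2 v2 su -subr_gt0.
have -> : a + Num.sqrt (2 * (a + g)) + 2 / 4 * ((a + g) / a)
            - (1 + (2 * a)^-1) * (a + g) = Num.sqrt (2 * (a + g)) - g.
  by field; lra.
by rewrite subr_gt0 ltr_sqrtr.
Qed.

End GapInequalities.

Theorem theorem1p5 (R : rcfType) (n : nat) (hn : (1 <= n)%N) :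
  let P := (d n ^ 2 < 2 * p n.+1)%N in
  let dn : R := (d n)%:R in
  let pn : R := (p n)%:R in
  let pn1 : R := (p n.+1)%:R in
  [/\ P <-> pn > dn * (dn / 2 - 1),
      P <-> (\sum_(1 <= i < (d n).+1) (i%:R : R))
              - (\sum_(1 <= i < n.+1) ((d i)%:R : R)) < dn / 2 + 2,
      P <-> Num.sqrt pn1 < Num.sqrt (pn + 2^-1) + Num.sqrt 2 / 2
    & P <-> (1 + (2 * pn)^-1) * pn1
              < (Num.sqrt pn + Num.sqrt 2 / 2 * Num.sqrt (pn1 / pn)) ^+ 2].
Proof.
move=> P dn pn pn1.
have p_lt := ltn_p hn.
have PE : P = (dn ^+ 2 < 2 * pn1) by rewrite /P -(ltr_nat R) natrM natrX.
have sum_dE : \sum_(1 <= i < n.+1) ((d i)%:R : R) = pn1 - 2.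
  by rewrite -natr_sum sum_d natrB ?p_gt1.
have pn1E : pn1 = pn + dn by rewrite -natrD subnKC // ltnW.
have pn_gt0 : 0 < pn by rewrite ltr0n ltnW ?p_gt1.
have dn_ge1 : 1 <= dn by rewrite ler1n subn_gt0.
rewrite (sum_natr_id R) sum_dE PE; split.
- by rewrite ltr_mul_halfB1 -pn1E; split.
- by rewrite ltr_triangular_subr; split.
- by rewrite pn1E (ltr_sqrt_addV2 (ltW pn_gt0) dn_ge1); split.
- by rewrite pn1E (ltr_sqr_sqrt_ratio pn_gt0 (ler0n R (d n))); split.
Qed.
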